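(* Assume the standing setting of the context, and let $\varrho,\sigma$ be continuous strictly positive densities on $D\times(0,T)$ (with respect to Lebesgue measure) of two measures in $\mathbb{M}_\nu$; set $v=\sigma/\varrho$. Suppose that for a.e. $t\in(0,T)$ $$\int_D\varrho(x,t)\,dx=\nu(D)+\int_0^t\int_Dc\,\varrho\,dx\,ds,\qquad \int_D\sigma(x,t)\,dx\le\nu(D)+\int_0^t\int_Dc\,\sigma\,dx\,ds,$$ and that for every $\lambda>0$ and a.e. $t\in(0,T)$ $$\int_De^{\lambda(1-v(x,t))}\varrho(x,t)\,dx\le1.$$ Then $v\equiv1$ on $D\times(0,T)$, i.e. $\sigma=\varrho$.
   Context: $T>0$; $D\subset\mathbb{R}^d$ open with exhaustion $(D_k)$ (bounded open, increasing, $\overline{D_k}\subset D_{k+1}$, $\bigcup D_k=D$); $\nu$ a Borel probability measure on $D$; $c\le0$. Coefficients $a^{ij},b^i,c$ Borel on $D\times[0,T]$, $A=(a^{ij})$ symmetric, satisfying (H1): for each $k$ there are $m_k,M_k>0$ with $m_k|y|^2\le(A(x,t)y,y)\le M_k|y|^2$ on $D_k\times[0,T]$; and (H2): for each $k$ there is $\Lambda_k$ with $|a^{ij}(x,t)-a^{ij}(y,t)|\le\Lambda_k|x-y|$ for $x,y\in D_k$, $t\in[0,T]$. Moreover $b\in L^p_{loc}(D\times(0,T))$, $c\in L^{p/2}_{loc}(D\times(0,T))$ for some $p>d+2$. $L\varphi=a^{ij}\partial_{x_i}\partial_{x_j}\varphi+b^i\partial_{x_i}\varphi+c\varphi$. Solutions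 of the Cauchy problem $\partial_t\mu=\partial_{x_i}\partial_{x_j}(a^{ij}\mu)-\partial_{x_i}(b^i\mu)+c\mu$, $\mu|_{t=0}=\nu$, are flows $(\mu_t)$ of Borel measures on $D$ (with $t\mapsto\mu_t(B)$ measurable, $\mu=\mu_t\,dt$ locally finite on $D\times(0,T)$) such that $a^{ij},b^i,c\in L^1(\overline{D_k}\times J,|\mu|)$ for all $k$ and compact $J\subset(0,T)$ and for every $\varphi\in C_0^\infty(D)$ and a.e. $t$: $\int\varphi\,d\mu_t-\int\varphi\,d\nu=\lim_{\varepsilon\to0+}\int_\varepsilon^t\int_DL\varphi\,d\mu_s\,ds$. $\mathcal{M}_\nu$: such solutions with $\mu_t\ge0$, $|c|\in L^1(\mu)$ and $\mu_t(D)\le\nu(D)+\int_0^t\int_Dc\,d\mu_s\,ds$ for a.e. $t$. $\mathbb{M}_\nu$: those $\mu\in\mathcal{M}_\nu$ with $b\in L^2(\mu,D_k\times[0,T])$ for all $k$. *)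

From HB Require Import structures.
From mathcomp Require Import all_boot all_order all_algebra.
From mathcomp Require Import all_classical all_reals all_analysis.
From mathcomp Require Import measurable_realfun.
Set Implicit Arguments. Unset Strict Implicit. Unset Printing Implicit Defensive.
Import Order.TTheory GRing.Theory Num.Theory.
Import numFieldNormedType.Exports.
Local Open Scope classical_set_scope.
Local Open Scope ring_scope.

Definition Rd (R : realType) (d : nat) : measurableType _ :=
  g_sigma_algebraType (@open 'rV[R]_d).

Definition esq (R : realType) (d : nat) (y : 'rV[R]_d) : R := \sum_(i < d) y 0 i ^+ 2.
Definition enorm (R : realType) (d : nat) (y : 'rV[R]_d) : R := Num.sqrt (esq y).

(* mu is the (Borel) Lebesgue measure on R^d: it gives closed boxes their volume.
   (Such a measure exists and is unique on the Borel sets.) *)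
Definition is_lebesgue_Rd (R : realType) (d : nat)
  (mu : {measure set (Rd R d) -> \bar R}) : Prop :=
  forall a b : 'rV[R]_d, (forall i, a 0 i <= b 0 i) ->
    mu [set x : 'rV[R]_d | forall i, a 0 i <= x 0 i <= b 0 i] =
      (\prod_(i < d) (b 0 i - a 0 i))%:E.

Definition ee (R : realType) (d : nat) (i : 'I_d) : 'rV[R]_d := delta_mx 0 i.

Fixpoint pder (R : realType) (d : nat) (l : seq 'I_d) (f : 'rV[R]_d -> R)
  : 'rV[R]_d -> R :=
  match l with
  | [::] => f
  | i :: l' => fun x => 'D_(ee R i) (pder l' f) x
  end.

Definition smooth (R : realType) (d : nat) (f : 'rV[R]_d -> R) : Prop :=
  forall l : seq 'I_d, continuous (pder l f) /\
    (forall (i : 'I_d) (x : 'rV[R]_d), derivable (pder l f) x (ee R i)).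

Definition Cc_infty (R : realType) (d : nat) (D : set 'rV[R]_d) (phi : 'rV[R]_d -> R)
  : Prop :=
  smooth phi /\ exists K : set 'rV[R]_d,
    compact K /\ K `<=` D /\ (forall x, ~ K x -> phi x = 0).

Section Kolmogorov.
Context (R : realType) (d : nat).
Local Notation V := 'rV[R]_d.

Definition Lop (a : 'I_d -> 'I_d -> V -> R -> R) (b : 'I_d -> V -> R -> R)
  (c : V -> R -> R) (phi : V -> R) (x : V) (t : R) : R :=
  \sum_(i < d) \sum_(j < d) a i j x t * pder [:: i; j] phi x
  + \sum_(i < d) b i x t * pder [:: i] phi x + c x t * phi x.

Definition dint (leb : {measure set (Rd R d) -> \bar R}) (K : set V) (J : set R)
  (f : V -> R -> R) : \bar R :=
  (\int[lebesgue_measure]_(s in J) \int[leb]_(x in (K : set (Rd R d))) (f x s)%:E)%E.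

Definition cpt_sub (T : R) (J : set R) := compact J /\ J `<=` `]0, T[.

(* The measure mu(dx dt) = rho(x,t) dx dt (mu_t(dx) = rho(x,t) dx) belongs to
   the class \mathbb{M}_nu of the paper (rho is assumed nonnegative). *)
Definition MMnu (leb : {measure set (Rd R d) -> \bar R}) (T : R) (D : set V)
  (Dk : nat -> set V) (nu : {measure set (Rd R d) -> \bar R})
  (a : 'I_d -> 'I_d -> V -> R -> R) (b : 'I_d -> V -> R -> R) (c : V -> R -> R)
  (rho : V -> R -> R) : Prop :=
  (forall x t, D x -> 0 < t < T -> 0 <= rho x t) /\
  (forall B : set (Rd R d), measurable B -> B `<=` D ->
     measurable_fun `]0, T[ ((fun t : R => \int[leb]_(x in B) (rho x t)%:E)%E : R -> \bar R)) /\
  (forall K J, compact K -> K `<=` D -> cpt_sub T J ->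
     (dint leb K J rho < +oo)%E) /\
  (forall k J, cpt_sub T J ->
     (forall i j, dint leb (closure (Dk k)) J (fun x s => `|a i j x s| * rho x s)%R < +oo)%E
     /\ (forall i, dint leb (closure (Dk k)) J (fun x s => `|b i x s| * rho x s)%R < +oo)%E
     /\ (dint leb (closure (Dk k)) J (fun x s => `|c x s| * rho x s)%R < +oo)%E) /\
  (* the Fokker-Planck-Kolmogorov equation with initial condition nu *)
  (forall phi, Cc_infty D phi ->
     {ae lebesgue_measure, forall t, (0 < t < T)%R ->
        ((fun e => dint leb D [set` `[e, t]%R] (fun x s => Lop a b c phi x s * rho x s)%R)
           @ 0^'+ -->
         (\int[leb]_(x in (D : set (Rd R d))) (phi x * rho x t)%R%:E
           - \int[nu]_(x in (D : set (Rd R d))) (phi x)%:E)%E)}) /\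
  (dint leb D [set` `]0, T[%R] (fun x s => `|c x s| * rho x s)%R < +oo)%E /\
  {ae lebesgue_measure, forall t, (0 < t < T)%R ->
     (\int[leb]_(x in (D : set (Rd R d))) (rho x t)%:E
       <= nu D + dint leb D [set` `]0, t[%R] (fun x s => c x s * rho x s)%R)%E} /\
  (forall k, (dint leb (Dk k) [set` `[0, T]%R] (fun x s => esq (\row_i b i x s) * rho x s)%R
               < +oo)%E).

End Kolmogorov.

From HB Require Import structures.
From mathcomp Require Import all_boot all_order all_algebra.
From mathcomp Require Import all_classical all_reals all_analysis.
From mathcomp Require Import measurable_realfun.
From mathcomp Require Import ring lra.
Import Order.TTheory GRing.Theory Num.Theory.
Import numFieldNormedType.Exports.
Local Open Scope classical_set_scope.
Local Open Scope ring_scope.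

(* If rho - sigma exceeded some al > 0 on a cube Q times a time interval, then
   for lam = 2 / (al |Q|) the exponential moment at a suitable time would be at
   least the integral over Q of lam (rho - sigma) >= 2, using e^u >= u.  So
   rho <= sigma.  Since c <= 0, the mass relations then give
   int sigma(t) <= int rho(t) < +oo, whereas sigma >= rho + al on a cube would
   add al |Q| to the mass. *)

Section integral_monotone.
Local Open Scope ereal_scope.
Context {dT : measure_display} {T : measurableType dT} {R : realType}
  (mu : {measure set T -> \bar R}).

(* No measurability needed: the integral is a supremum over the simple
   functions below the integrand. *)
Lemma ge0_le_integral_nomeas (D : set T) (f g : T -> \bar R) :
  (forall x, D x -> 0 <= f x) -> (forall x, D x -> f x <= g x) ->
  \int[mu]_(x in D) f x <= \int[mu]_(x in D) g x.
Proof.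
move=> f0 fg.
have g0 x : D x -> 0 <= g x by move=> Dx; exact: le_trans (f0 _ Dx) (fg _ Dx).
rewrite !ge0_integralE//; apply: ereal_sup_le => _ [h /= hf <-]; exists h => //= x.
apply: le_trans (hf x) _; rewrite /patch; case: ifP => // /set_mem Dx; exact: fg.
Qed.

Lemma le_integral_nomeas (D : set T) (f g : T -> \bar R) :
  (forall x, D x -> f x <= g x) ->
  \int[mu]_(x in D) f x <= \int[mu]_(x in D) g x.
Proof.
move=> fg; rewrite (integralE _ _ f) (integralE _ _ g); apply: leeB.
- apply: ge0_le_integral_nomeas => x Dx; first exact: funepos_ge0.
  by apply: (@funepos_le _ _ D) => //; [move=> y /set_mem Dy; exact: fg|exact/mem_set].
- apply: ge0_le_integral_nomeas => x Dx; first exact: funeneg_ge0.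
  by apply: (@funeneg_le _ _ D) => //; [move=> y /set_mem Dy; exact: fg|exact/mem_set].
Qed.

Lemma integralD_indic_le (D B : set T) (g f : T -> R) (k : R) :
  measurable D -> measurable B -> B `<=` D -> measurable_fun D g ->
  (forall x, D x -> 0 <= g x)%R -> (0 <= k)%R ->
  (forall x, D x -> g x + k * \1_B x <= f x)%R ->
  \int[mu]_(x in D) (g x)%:E + k%:E * mu B <= \int[mu]_(x in D) (f x)%:E.
Proof.
move=> mD mB BD mg g0 k0 gf.
have mIB : measurable_fun D (fun x => (\1_B x : R)%:E).
  by apply: measurableT_comp => //; exact: measurable_indic.
have <- : \int[mu]_(x in D) (k * \1_B x)%R%:E = k%:E * mu B.
  under eq_integral do rewrite EFinM.
  by rewrite ge0_integralZl_EFin // integral_indic // setIidl.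
have kIB0 x : D x -> 0 <= (k * \1_B x)%R%:E by move=> _; rewrite lee_fin mulr_ge0.
rewrite -ge0_integralD //.
- by apply: le_integral_nomeas => x Dx; rewrite -EFinD lee_fin gf.
- exact: measurableT_comp.
- by apply: measurableT_comp => //; apply: measurable_funM => //; exact: measurable_indic.
Qed.

End integral_monotone.

Lemma ae_exists_near {R : realType} {Q : R -> Prop} (t0 e : R) : 0 < e ->
  {ae lebesgue_measure, forall t, Q t} -> exists2 t, `|t - t0| < e & Q t.
Proof.
move=> e0 [N [mN N0 QN]]; apply: contrapT => noQ.
have sub : `](t0 - e), (t0 + e)[ `<=` N.
  move=> s /=; rewrite in_itv /= => /andP[h1 h2]; apply: QN => /= Qs; apply: noQ.
  by exists s => //; rewrite ltr_norml; apply/andP; split; lra.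
have := le_measure lebesgue_measure (mem_set (measurable_itv `](t0 - e), (t0 + e)[))
  (mem_set mN) sub.
rewrite /= N0 lebesgue_measure_itv /= lte_fin.
have -> : t0 - e < t0 + e by lra.
by rewrite -EFinD lee_fin; lra.
Qed.

Section space_time.
Context {R : realType} {d : nat}.
Local Notation V := 'rV[R]_d.

Definition cube (x0 : V) (e : R) : set V :=
  [set y | forall i, `|y 0 i - x0 0 i| <= e].

Lemma cube_center (x0 : V) (e : R) : 0 <= e -> cube x0 e x0.
Proof. by move=> e0 i; rewrite subrr normr0. Qed.

Lemma closed_cube (x0 : V) (e : R) : closed (cube x0 e).
Proof.
have -> : cube x0 e = \bigcap_(i in setT)
    ((fun y : V => y 0 i) @^-1` [set r | x0 0 i - e <= r] `&`
     (fun y : V => y 0 i) @^-1` [set r | r <= x0 0 i + e]).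
  apply/seteqP; split => y /= H i; first by move=> _; apply/andP; rewrite -ler_distl.
  by have [/= ? ?] := H i I; rewrite ler_distl; apply/andP.
apply: closed_bigI => i _; apply: closedI; apply: preimage_closed;
  by [move=> y _; exact: coord_continuous|exact: closed_ge|exact: closed_le].
Qed.

Lemma measurable_cube (x0 : V) (e : R) : measurable (cube x0 e : set (Rd R d)).
Proof.
rewrite -[cube x0 e]setCK; apply: measurableC.
by apply: sub_sigma_algebra; exact: closed_openC (closed_cube x0 e).
Qed.

Lemma lebesgue_cube (leb : {measure set (Rd R d) -> \bar R}) (x0 : V) (e : R) :
  is_lebesgue_Rd leb -> 0 <= e -> leb (cube x0 e : set (Rd R d)) = ((e *+ 2) ^+ d)%:E.
Proof.
move=> lebE e0.
have -> : cube x0 e = [set y : V | forall i,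
    (\row_j (x0 0 j - e)) 0 i <= y 0 i <= (\row_j (x0 0 j + e)) 0 i].
  by apply/seteqP; split => y /= H i; move: (H i); rewrite !mxE ler_distl.
rewrite lebE => [|i]; last by rewrite !mxE; lra.
congr (_%:E); rewrite (eq_bigr (fun _ => e *+ 2)) ?prodr_const ?card_ord // => i _.
by rewrite !mxE mulr2n; lra.
Qed.

Lemma near_cube_itv (x0 : V) (t0 : R) (P : V * R -> Prop) :
  (\forall z \near (x0, t0), P z) ->
  exists2 e : R, 0 < e & forall y s, cube x0 e y -> `|s - t0| < e -> P (y, s).
Proof.
move=> /nbhs_ballP [e /= e0 He].
have e2 : 0 < e / 2 by rewrite divr_gt0.
have lt2 : e / 2 < e by rewrite ltr_pdivrMr // ltr_pMr // ltr1n.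
exists (e / 2) => // y s hy hs; apply: He; split.
- split => // i j; rewrite (ord1 i) /ball /= distrC.
  exact: le_lt_trans (hy j) lt2.
- by rewrite /ball /= distrC (lt_trans hs lt2).
Qed.

Lemma open_setX_itv {D : set V} (T : R) :
  open D -> open (D `*` `]0, T[%classic : set (V * R)).
Proof.
move=> oD; rewrite openE => -[x t] [/= Dx tT].
by exists (D, `]0, T[%classic) => //=; split; [exact: oD|exact: near_in_itvoo].
Qed.

Lemma continuous_at_slice {F : V * R -> R} {y : V} {t : R} :
  {for (y, t), continuous F} -> {for y, continuous (fun y => F (y, t))}.
Proof.
move=> cF; apply: (continuous_comp _ cF).
exact: (@cvg_pair _ _ _ (nbhs y) (nbhs y) (nbhs t) _ _ _ id (fun=> t) cvg_id (cvg_cst t)).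
Qed.

Lemma open_continuous_measurable_fun (D : set V) (f : V -> R) :
  open D -> (forall y, D y -> {for y, continuous f}) ->
  measurable_fun (D : set (Rd R d)) (f : Rd R d -> R).
Proof.
move=> oD cf; apply: (measurability _ (RGenOpens.measurableE R)).
move=> _ [_ [a [b ->]] <-].
suff : open (D `&` f @^-1` `]a, b[ : set V) by exact: sub_sigma_algebra.
rewrite openE => y [Dy /= fy]; apply: filterI; first exact: oD.
by apply: (cf y Dy); exact: interval_open.
Qed.

Lemma continuous_gt_cube {A : set (V * R)} {F : V * R -> R} {x0 : V} {t0 : R} :
  open A -> A (x0, t0) -> {for (x0, t0), continuous F} -> 0 < F (x0, t0) ->
  exists2 e : R, 0 < e & forall y s, cube x0 e y -> `|s - t0| < e ->
    A (y, s) /\ F (x0, t0) / 2 < F (y, s).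
Proof.
move=> oA Az0 cF F0.
apply: (near_cube_itv x0 t0 (fun z => A z /\ F (x0, t0) / 2 < F z)).
have F2 : F (x0, t0) / 2 < F (x0, t0) by rewrite ltr_pdivrMr // ltr_pMr // ltr1n.
by apply: filterI; [exact: oA|exact: cvgr_gt _ cF _ F2].
Qed.

End space_time.

Lemma le_dint (R : realType) (d : nat) (leb : {measure set (Rd R d) -> \bar R})
    (K : set 'rV[R]_d) (J : set R) (f g : 'rV[R]_d -> R -> R) :
  (forall x s, K x -> J s -> f x s <= g x s) -> (dint leb K J f <= dint leb K J g)%E.
Proof.
move=> fg; apply: le_integral_nomeas => s Js; apply: le_integral_nomeas => x Kx.
by rewrite lee_fin fg.
Qed.

Lemma dint_le0 (R : realType) (d : nat) (leb : {measure set (Rd R d) -> \bar R})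
    (K : set 'rV[R]_d) (J : set R) (f : 'rV[R]_d -> R -> R) :
  (forall x s, K x -> J s -> f x s <= 0) -> (dint leb K J f <= 0)%E.
Proof.
have -> : 0%E = dint leb K J (fun _ _ => 0).
  by rewrite /dint; apply/esym/integral0_eq => s _; exact: integral0_eq.
exact: le_dint.
Qed.

Section density_comparison.
Context {R : realType} {d : nat} {leb : {measure set (Rd R d) -> \bar R}}
  {T : R} {D : set 'rV[R]_d} {rho sigma : 'rV[R]_d -> R -> R}.
Local Notation V := 'rV[R]_d.
Local Notation DT := (D `*` `]0, T[%classic : set (V * R)).
Hypotheses (lebE : is_lebesgue_Rd leb) (oD : open D)
  (rho_cont : {within DT, continuous (fun z : V * R => rho z.1 z.2)})
  (sigma_cont : {within DT, continuous (fun z : V * R => sigma z.1 z.2)})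
  (rho_gt0 : forall x t, D x -> 0 < t < T -> 0 < rho x t).

Let mD : measurable (D : set (Rd R d)). Proof. exact: sub_sigma_algebra. Qed.

Let DT_mem {x t} : D x -> 0 < t < T -> DT (x, t).
Proof. by move=> Dx tT; split => //=; rewrite in_itv. Qed.

Let continuous_at_DT {F : V * R -> R} {x t} : {within DT, continuous F} ->
  D x -> 0 < t < T -> {for (x, t), continuous F}.
Proof.
rewrite continuous_open_subspace; last exact: open_setX_itv.
by move=> cF Dx tT; apply: cF; rewrite inE; exact: DT_mem.
Qed.

Let positive_near_cube {F : V * R -> R} {x0 t0} : {within DT, continuous F} ->
  D x0 -> 0 < t0 < T -> 0 < F (x0, t0) ->
  exists2 e : R, 0 < e & [/\ cube x0 e `<=` D,
    forall s, `|s - t0| < e -> 0 < s < T &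
    forall y s, cube x0 e y -> `|s - t0| < e -> F (x0, t0) / 2 < F (y, s)].
Proof.
move=> cF Dx0 t0T F0.
have [e e0 gap] := continuous_gt_cube (open_setX_itv T oD) (DT_mem Dx0 t0T)
  (continuous_at_DT cF Dx0 t0T) F0.
have t0_near : `|t0 - t0| < e by rewrite subrr normr0.
exists e => //; split=> [y /gap/(_ t0_near)[[]] //|s /(gap x0)|y s cy /(gap y s cy)[]//].
by case/(_ (cube_center x0 e (ltW e0))) => -[_ /=]; rewrite in_itv.
Qed.

Lemma density_le_of_exp_moment :
  (forall lambda : R, 0 < lambda ->
     {ae lebesgue_measure, forall t, 0 < t < T ->
        (\int[leb]_(x in (D : set (Rd R d)))
            (expR (lambda * (1 - sigma x t / rho x t)) * rho x t)%R%:E <= 1)%E}) ->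
  forall x t, D x -> 0 < t < T -> rho x t <= sigma x t.
Proof.
move=> exp_moment x0 t0 Dx0 t0T; rewrite leNgt; apply/negP => sigma_lt.
pose F (z : V * R) := rho z.1 z.2 - sigma z.1 z.2.
have cF : {within DT, continuous F}.
  by move=> z; apply: cvgB; [exact: rho_cont|exact: sigma_cont].
have F0 : 0 < F (x0, t0) by rewrite subr_gt0.
have [e e0 [cubeD tT gap]] := positive_near_cube cF Dx0 t0T F0.
set al := F (x0, t0) / 2 in gap; set m := (e *+ 2) ^+ d.
have al_gt0 : 0 < al by rewrite divr_gt0.
have m_gt0 : 0 < m by rewrite exprn_gt0 // mulrn_wgt0.
pose lam := 2 / (al * m).
have lam_gt0 : 0 < lam by rewrite divr_gt0 // mulr_gt0.
have [t tt0 bound] := ae_exists_near t0 e e0 (exp_moment lam lam_gt0).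
have {}tT := tT t tt0.
have exp_ge y : D y -> 0 + lam * al * \1_(cube x0 e) y <=
    expR (lam * (1 - sigma y t / rho y t)) * rho y t.
  move=> Dy; have rho_y := rho_gt0 y t Dy tT; rewrite add0r indicE.
  have [/set_mem cy|_] := boolP (y \in cube x0 e); last first.
    by rewrite mulr0 mulr_ge0 // ?expR_ge0 // ltW.
  apply: (@le_trans _ _ (lam * (1 - sigma y t / rho y t) * rho y t)).
    have -> : lam * (1 - sigma y t / rho y t) * rho y t = lam * F (y, t).
      by rewrite /F /=; field; rewrite gt_eqF.
    by rewrite mulr1 ler_pM2l // ltW // gap.
  by rewrite ler_pM2r //; apply: le_trans (expR_ge1Dx _); lra.
have := integralD_indic_le leb _ _ (fun=> 0) _ (lam * al) mD (measurable_cube x0 e)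
  cubeD (measurable_cst _) (fun _ _ => lexx 0) (ltW (mulr_gt0 lam_gt0 al_gt0)) exp_ge.
rewrite integral0 add0e lebesgue_cube ?(ltW e0) // -EFinM.
have -> : lam * al * m = 2 by rewrite /lam; field; rewrite !gt_eqF.
by move=> /le_trans/(_ (bound tT)); rewrite lee_fin; lra.
Qed.

Lemma density_ge_of_mass (c : V -> R -> R) (m0 : \bar R) :
  (forall x t, c x t <= 0) -> (m0 < +oo)%E ->
  (forall x t, D x -> 0 < t < T -> rho x t <= sigma x t) ->
  {ae lebesgue_measure, forall t, 0 < t < T ->
     (\int[leb]_(x in (D : set (Rd R d))) (rho x t)%:E
       = m0 + dint leb D [set` `]0, t[%R] (fun x s => c x s * rho x s)%R)%E} ->
  {ae lebesgue_measure, forall t, 0 < t < T ->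
     (\int[leb]_(x in (D : set (Rd R d))) (sigma x t)%:E
       <= m0 + dint leb D [set` `]0, t[%R] (fun x s => c x s * sigma x s)%R)%E} ->
  forall x t, D x -> 0 < t < T -> sigma x t <= rho x t.
Proof.
move=> c_le0 m0_lty rho_le mass_rho mass_sigma x0 t0 Dx0 t0T.
rewrite leNgt; apply/negP => rho_lt.
pose F (z : V * R) := sigma z.1 z.2 - rho z.1 z.2.
have cF : {within DT, continuous F}.
  by move=> z; apply: cvgB; [exact: sigma_cont|exact: rho_cont].
have F0 : 0 < F (x0, t0) by rewrite subr_gt0.
have [e e0 [cubeD tT gap]] := positive_near_cube cF Dx0 t0T F0.
set al := F (x0, t0) / 2 in gap; set m := (e *+ 2) ^+ d.
have al_gt0 : 0 < al by rewrite divr_gt0.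
have m_gt0 : 0 < m by rewrite exprn_gt0 // mulrn_wgt0.
have [t tt0 [mass_rho_t mass_sigma_t]] :=
  ae_exists_near t0 e e0
    (@filterI _ _ (ae_filter_ringOfSetsType lebesgue_measure) _ _ mass_rho mass_sigma).
have {}tT := tT t tt0; move: mass_rho_t mass_sigma_t => /(_ tT) rhoE /(_ tT) sigma_le.
have in_0t s : s \in `]0, t[ -> 0 < s < T.
  by rewrite in_itv /= => /andP[s0 st]; case/andP: tT => _ tT; rewrite s0 (lt_trans st).
set Ir := (\int[leb]_(x in _) _)%E in rhoE.
set Is := (\int[leb]_(x in _) _)%E in sigma_le.
have Is_le_Ir : (Is <= Ir)%E.
  apply: le_trans sigma_le _; rewrite rhoE leeD2l //; apply: le_dint => y s Dy /in_0t s0T.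
  exact/ler_wnM2l/rho_le.
have Ir_fin : Ir \is a fin_num.
  rewrite ge0_fin_numE; last by apply: integral_ge0 => y Dy; rewrite lee_fin ltW ?rho_gt0.
  rewrite rhoE; apply: le_lt_trans m0_lty; apply: geeDl; apply: dint_le0 => y s Dy /in_0t s0T.
  by rewrite mulr_le0_ge0 // ltW ?rho_gt0.
have rho_t_meas := open_continuous_measurable_fun D (fun y => rho y t) oD
  (fun y Dy => continuous_at_slice (continuous_at_DT rho_cont Dy tT)).
have sigma_ge y : D y -> rho y t + al * \1_(cube x0 e) y <= sigma y t.
  move=> Dy; rewrite indicE; have [/set_mem cy|_] := boolP (y \in cube x0 e).
    by rewrite mulr1 -lerBrDl ltW // gap.
  by rewrite mulr0 addr0 rho_le.
have := integralD_indic_le leb _ _ _ _ al mD (measurable_cube x0 e) cubeD rho_t_meas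
  (fun y Dy => ltW (rho_gt0 y t Dy tT)) (ltW al_gt0) sigma_ge.
rewrite lebesgue_cube ?(ltW e0) // -EFinM => /le_trans/(_ Is_le_Ir).
by rewrite -/Ir -(fineK Ir_fin) -EFinD lee_fin gerDl leNgt mulr_gt0.
Qed.

End density_comparison.

Theorem lemma4p1 (R : realType) (d : nat) (T : R) (D : set 'rV[R]_d)
  (Dk : nat -> set 'rV[R]_d)
  (leb : {measure set (Rd R d) -> \bar R})
  (nu : {measure set (Rd R d) -> \bar R})
  (a : 'I_d -> 'I_d -> 'rV[R]_d -> R -> R) (b : 'I_d -> 'rV[R]_d -> R -> R)
  (c : 'rV[R]_d -> R -> R) (p : R)
  (rho sigma : 'rV[R]_d -> R -> R) :
  0 < T ->
  open D ->
  (* exhaustion of D *)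
  (forall k, open (Dk k) /\ [bounded x | x in Dk k]) ->
  (forall k, closure (Dk k) `<=` Dk k.+1) ->
  \bigcup_k Dk k = D ->
  (* Lebesgue measure on R^d *)
  is_lebesgue_Rd leb ->
  (* nu: Borel probability measure on D *)
  nu setT = 1%E -> nu (~` D) = 0%E ->
  (* coefficients: Borel on D x [0,T] *)
  (forall i j, measurable_fun (D `*` `[0, T]%classic : set (Rd R d * R))
                 (fun z : Rd R d * R => a i j z.1 z.2)) ->
  (forall i, measurable_fun (D `*` `[0, T]%classic : set (Rd R d * R))
                 (fun z : Rd R d * R => b i z.1 z.2)) ->
  measurable_fun (D `*` `[0, T]%classic : set (Rd R d * R))
                 (fun z : Rd R d * R => c z.1 z.2) ->
  (* A symmetric *)
  (forall i j x t, a i j x t = a j i x t) ->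
  (* (H1) *)
  (forall k, exists m M : R, 0 < m /\ 0 < M /\
     forall x t (y : 'rV[R]_d), Dk k x -> 0 <= t <= T ->
       m * esq y <= \sum_(i < d) \sum_(j < d) a i j x t * y 0 i * y 0 j <= M * esq y) ->
  (* (H2) *)
  (forall k, exists L : R, forall i j x y t, Dk k x -> Dk k y -> 0 <= t <= T ->
     `|a i j x t - a i j y t| <= L * enorm (x - y)) ->
  (* b in L^p_loc, c in L^{p/2}_loc, p > d + 2 *)
  (d%:R + 2 < p) ->
  (forall K J, compact K -> K `<=` D -> cpt_sub T J ->
     (dint leb K J (fun x s => enorm (\row_i b i x s) `^ p)%R < +oo)%E) ->
  (forall K J, compact K -> K `<=` D -> cpt_sub T J ->
     (dint leb K J (fun x s => `|c x s| `^ (p / 2))%R < +oo)%E) ->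
  (* c <= 0 *)
  (forall x t, c x t <= 0) ->
  (* rho, sigma: continuous strictly positive densities of measures in \mathbb{M}_nu *)
  {within (D `*` `]0, T[%classic), continuous (fun z : 'rV[R]_d * R => rho z.1 z.2)} ->
  {within (D `*` `]0, T[%classic), continuous (fun z : 'rV[R]_d * R => sigma z.1 z.2)} ->
  (forall x t, D x -> 0 < t < T -> 0 < rho x t) ->
  (forall x t, D x -> 0 < t < T -> 0 < sigma x t) ->
  MMnu leb T D Dk nu a b c rho ->
  MMnu leb T D Dk nu a b c sigma ->
  (* mass identities *)
  {ae lebesgue_measure, forall t, 0 < t < T ->
     (\int[leb]_(x in (D : set (Rd R d))) (rho x t)%:E
       = nu D + dint leb D [set` `]0, t[%R] (fun x s => c x s * rho x s)%R)%E} ->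
  {ae lebesgue_measure, forall t, 0 < t < T ->
     (\int[leb]_(x in (D : set (Rd R d))) (sigma x t)%:E
       <= nu D + dint leb D [set` `]0, t[%R] (fun x s => c x s * sigma x s)%R)%E} ->
  (* exponential moment condition, v = sigma / rho *)
  (forall lambda : R, 0 < lambda ->
     {ae lebesgue_measure, forall t, 0 < t < T ->
        (\int[leb]_(x in (D : set (Rd R d)))
            (expR (lambda * (1 - sigma x t / rho x t)) * rho x t)%R%:E <= 1)%E}) ->
  forall x t, D x -> 0 < t < T -> sigma x t = rho x t.
Proof.
move=> _ oD _ _ _ lebE nu1 _ _ _ _ _ _ _ _ _ _ c_le0 rho_cont sigma_cont rho_gt0 _ _ _
  mass_rho mass_sigma exp_moment x t Dx tT.
have rho_le := density_le_of_exp_moment lebE oD rho_cont sigma_cont rho_gt0 exp_moment.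
have nuD_lty : (nu D < +oo)%E.
  apply: le_lt_trans (ltry 1); rewrite -nu1; apply: le_measure; rewrite ?inE //.
  exact: sub_sigma_algebra.
apply/eqP; rewrite eq_le rho_le // andbT.
exact: (density_ge_of_mass lebE oD rho_cont sigma_cont rho_gt0 c _ c_le0
  nuD_lty rho_le mass_rho mass_sigma).
Qed.
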